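(* Consider the stochastic bipartite matching model described in the context, under the stability condition, with stationary distribution $\pi$. Then for every $\mathcal{A} \in \mathcal{J}$, \[ \Delta(\mathcal{A})\, \pi(\mathcal{A}) = \mu(\mathcal{A}\cap\mathcal{K}) \sum_{i \in \mathcal{A}\cap\mathcal{I}} \lambda_i\, \pi(\mathcal{A}\setminus\{i\}) + \lambda(\mathcal{A}\cap\mathcal{I}) \sum_{k \in \mathcal{A}\cap\mathcal{K}} \mu_k\, \pi(\mathcal{A}\setminus\{k\}) + \sum_{i \in \mathcal{A}\cap\mathcal{I}} \sum_{k\in\mathcal{A}\cap\mathcal{K}} \lambda_i \mu_k\, \pi(\mathcal{A}\setminus\{i,k\}). \]
   Context: Let $\mathcal{I}$ (customer classes) and $\mathcal{K}$ (server classes) be disjoint finite non-empty sets, and consider a connected bipartite graph (the compatibility graph) on $\mathcal{I}\cup\mathcal{K}$ whose edges all join an element of $\mathcal{I}$ to an element of $\mathcal{K}$; write $i\sim k$ if $i\in\mathcal{I}$ and $k\in\mathcal{K}$ are adjacent and $i\nsim k$ otherwise. For $i\in\mathcal{I}$ let $\mathcal{K}_i=\{k\in\mathcal{K}: i\sim k\}$ and for $k\in\mathcal{K}$ let $\mathcal{I}_k=\{i\in\mathcal{I}: i\sim k\}$. Let $\lambda_i>0$ ($i\in\mathcal{I}$) and $\mu_k>0$ ($k\in\mathcal{K}$) with $\sum_i\lambda_i=\sum_k\mu_k=1$. For $\mathcal{A}\subseteq\mathcal{I}$ write $\lambda(\mathcal{A})=\sum_{i\in\mathcal{A}}\lambda_i$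 and $\mathcal{K}(\mathcal{A})=\bigcup_{i\in\mathcal{A}}\mathcal{K}_i$; for $\mathcal{A}\subseteq\mathcal{K}$ write $\mu(\mathcal{A})=\sum_{k\in\mathcal{A}}\mu_k$ and $\mathcal{I}(\mathcal{A})=\bigcup_{k\in\mathcal{A}}\mathcal{I}_k$. Model: time is slotted; in each slot exactly one customer and one server arrive, the customer being of class $i$ with probability $\lambda_i$ and the server of class $k$ with probability $\mu_k$, independently within and across slots. Unmatched customers and unmatched servers wait in two queues in arrival order. Upon each arrival (first-come-first-matched policy): (1) the incoming customer is matched with the longest-waiting compatible unmatched server, if any; (2) the incoming server is matched with the longest-waiting compatible unmatched customer, if any; (3) if neither can be matched with a waiting item, they are matched with each other if compatible; (4) any incoming item still unmatched is appended to the back of its queue. Matched items leave immediately. The state is $(c,d)$ with $c=(c_1,\dots,c_n)$ the classes of unmatched customers and $d=(d_1,\dots,d_n)$ the classes of unmatched servers, in arrival order (the two lengths are always equal); the state space is $\Pi=\bigcup_{n\ge0}\{(c,d)\in\mathcal{I}^n\times\mathcal{K}^n: c_p\nsim d_q\ \forall p,q\}$, and $\varnothing$ denotes the empty state. Stability condition (assumed): $\lambda(\mathcal{A})<\mu(\mathcal{K}(\mathcal{A}))$ for every non-empty $\mathcal{A}\subsetneq\mathcal{I}$ (equivalently $\mu(\mathcal{A})<\lambda(\mathcal{I}(\mathcal{A}))$ for every non-empty $\mathcal{A}\subsetneq\mathcal{K}$). Then the Markov chain of states is ergodic with stationary distribution $\pi(c,d)=\pi(\varnothing)\prod_{p=1}^n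 \frac{\lambda_{c_p}}{\mu(\mathcal{K}(\{c_1,\dots,c_p\}))}\frac{\mu_{d_p}}{\lambda(\mathcal{I}(\{d_1,\dots,d_p\}))}$, $(c,d)\in\Pi$. Let $\mathcal{J}$ be the family of independent sets $\mathcal{A}\subseteq\mathcal{I}\cup\mathcal{K}$ of the compatibility graph such that $\mathcal{A}\cap\mathcal{I}$ and $\mathcal{A}\cap\mathcal{K}$ are both non-empty, and $\mathcal{J}_0=\mathcal{J}\cup\{\emptyset\}$. For $\mathcal{A}\in\mathcal{J}_0$, let $\Pi_{\mathcal{A}}$ be the set of $(c,d)\in\Pi$ with $\{c_1,\dots,c_n\}=\mathcal{A}\cap\mathcal{I}$ and $\{d_1,\dots,d_n\}=\mathcal{A}\cap\mathcal{K}$, and $\pi(\mathcal{A})=\sum_{(c,d)\in\Pi_{\mathcal{A}}}\pi(c,d)$; by convention $\pi(\mathcal{A})=0$ if $\mathcal{A}\notin\mathcal{J}_0$. For $\mathcal{A}\in\mathcal{J}$, $\Delta(\mathcal{A})=\mu(\mathcal{K}(\mathcal{A}\cap\mathcal{I}))\,\lambda(\mathcal{I}(\mathcal{A}\cap\mathcal{K}))-\lambda(\mathcal{A}\cap\mathcal{I})\,\mu(\mathcal{A}\cap\mathcal{K})$. *)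

From HB Require Import structures.
From mathcomp Require Import all_boot all_order all_algebra.
From mathcomp Require Import all_classical all_reals all_analysis.
Set Implicit Arguments. Unset Strict Implicit. Unset Printing Implicit Defensive.
Import Order.TTheory GRing.Theory Num.Theory numFieldNormedType.Exports.
Local Open Scope ring_scope.

Section Matching.
Variables (R : realType) (I K : finType) (adj : I -> K -> bool)
          (lam : I -> R) (mu : K -> R).

Definition lamS (A : {set I}) : R := \sum_(i in A) lam i.
Definition muS (A : {set K}) : R := \sum_(k in A) mu k.

Definition KofI (A : {set I}) : {set K} := [set k | [exists i in A, adj i k]].
Definition IofK (A : {set K}) : {set I} := [set i | [exists k in A, adj i k]].

Definition graph_rel : rel (I + K)%type := fun x y =>
  match x, y with
  | inl i, inr k => adj i k
  | inr k, inl i => adj i k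
  | _, _ => false
  end.

Definition connected_graph : Prop := forall x y : (I + K)%type, connect graph_rel x y.

(* (c,d) of length n is a state of Pi: no unmatched customer is compatible
   with an unmatched server *)
Definition valid_state n (c : n.-tuple I) (d : n.-tuple K) : bool :=
  [forall p : 'I_n, forall q : 'I_n, ~~ adj (tnth c p) (tnth d q)].

Definition prefI n (c : n.-tuple I) (p : 'I_n) : {set I} :=
  [set tnth c q | q : 'I_n & (q <= p)%N].
Definition prefK n (d : n.-tuple K) (p : 'I_n) : {set K} :=
  [set tnth d q | q : 'I_n & (q <= p)%N].

(* unnormalized product-form weight pi(c,d)/pi(empty) *)
Definition weight n (c : n.-tuple I) (d : n.-tuple K) : R :=
  \prod_(p < n) (lam (tnth c p) / muS (KofI (prefI c p))
                 * (mu (tnth d p) / lamS (IofK (prefK d p)))).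

Definition mass_n (n : nat) : R :=
  \sum_(c : n.-tuple I) \sum_(d : n.-tuple K | valid_state c d) weight c d.

Definition pi0 : R := (limn (series mass_n))^-1.

Definition massA_n (AI : {set I}) (AK : {set K}) (n : nat) : R :=
  \sum_(c : n.-tuple I) \sum_(d : n.-tuple K |
      [&& valid_state c d, [set x in tval c] == AI & [set x in tval d] == AK])
    weight c d.

(* pi(A) = sum of pi(c,d) over (c,d) in Pi_A; it is automatically 0 when
   A = AI u AK is not in J_0 (then Pi_A is empty) *)
Definition piA (AI : {set I}) (AK : {set K}) : R :=
  pi0 * limn (series (massA_n AI AK)).

Definition Delta (AI : {set I}) (AK : {set K}) : R :=
  muS (KofI AI) * lamS (IofK AK) - lamS AI * muS AK.

End Matching.

(* For an independent set A = AI u AK, every pair of words c over AI and d over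
   AK is a valid state, and the product-form weight of (c, d) is a customer
   factor of c times a server factor of d.  Hence the mass of the states of Pi_A
   of length n is S_I(AI, n) * S_K(AK, n).  Splitting off the last letter of c gives
     mu(K(AI)) S_I(AI, n+1) = lambda(AI) S_I(AI, n) + sum_(i in AI) lambda_i S_I(AI \ i, n),
   and symmetrically for d.  Multiplying the two recursions, the mass x_n of Pi_A obeys
     mu(K(AI)) lambda(I(AK)) x_(n+1) = lambda(AI) mu(AK) x_n + r_n,
   where r_n is the right-hand side of the balance equation evaluated on the
   masses at length n of the sets with one or two classes removed.  Stability
   gives lambda(AI) mu(AK) < mu(K(AI)) lambda(I(AK)); summing over n and
   inducting on |A|, all the series converge and their sums satisfy the balance
   equation.  The normalising constant pi(empty) is a common factor of both sides. *)

From HB Require Import structures.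
From mathcomp Require Import all_boot all_order all_algebra.
From mathcomp Require Import all_classical all_reals all_analysis.
From mathcomp Require Import ring lra zify.
(* Give the finset/fintype lemmas precedence over their classical_sets homonyms. *)
From mathcomp Require Import fintype finset.
Set Implicit Arguments. Unset Strict Implicit. Unset Printing Implicit Defensive.
Import Order.TTheory GRing.Theory Num.Theory numFieldNormedType.Exports.
Local Open Scope ring_scope.

Lemma big_tuple_rcons (V : Type) (idx : V) (op : Monoid.com_law idx)
    (T : finType) n (F : n.+1.-tuple T -> V) :
  \big[op/idx]_(c : n.+1.-tuple T) F c =
  \big[op/idx]_(c : n.-tuple T) \big[op/idx]_(x : T) F [tuple of rcons c x].
Proof.
rewrite pair_big /=.
pose h (cx : n.-tuple T * T) : n.+1.-tuple T := [tuple of rcons cx.1 cx.2].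
have h_inj : injective h.
  by move=> [c x] [d y] /(congr1 val) /rcons_inj [/val_inj -> ->].
have h_bij : bijective h.
  by apply: (inj_card_bij h_inj); rewrite card_prod !card_tuple expnS mulnC.
by rewrite (reindex h) //; exact: onW_bij.
Qed.

Lemma prefI_take (T : finType) n (c : n.-tuple T) (p : 'I_n) :
  prefI c p = [set x in take p.+1 c].
Proof.
have size_take_c : size (take p.+1 c) = p.+1 by rewrite size_takel // size_tuple.
apply/setP => x; rewrite inE; apply/imsetP/idP.
- case=> q; rewrite inE => qp ->.
  rewrite (tnth_nth x); apply/(nthP x); exists q; first by rewrite size_take_c ltnS.
  by rewrite nth_take // ltnS.
- case/(nthP x) => q; rewrite size_take_c => qp <-.
  have qn : (q < n)%N by apply: leq_trans qp (ltn_ord p).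
  exists (Ordinal qn); first by rewrite inE -ltnS.
  by rewrite (tnth_nth x) nth_take.
Qed.

Lemma set_rcons (T : finType) (s : seq T) x : [set y in rcons s x] = x |: [set y in s].
Proof. by apply/setP => y; rewrite !inE mem_rcons in_cons. Qed.

Lemma setU1_eq (T : finType) (x : T) (B A : {set T}) :
  (x |: B == A) = (x \in A) && ((B == A) || (B == A :\ x)).
Proof.
apply/eqP/idP => [<- | /andP[xA /orP[/eqP-> | /eqP->]]].
- rewrite setU11 /=; case xB: (x \in B).
    by rewrite (setUidPr _) ?sub1set ?xB ?eqxx.
  by rewrite setU1K ?xB ?eqxx ?orbT.
- by apply/setUidPr; rewrite sub1set.
- exact: setD1K.
Qed.

Section PrefixWeight.
Variables (R : numFieldType) (T : finType) (w : T -> R) (f : {set T} -> R).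

Definition prefix_weight n (c : n.-tuple T) : R :=
  \prod_(p < n) (w (tnth c p) / f (prefI c p)).

Definition support_mass (A : {set T}) n : R :=
  \sum_(c : n.-tuple T | [set x in tval c] == A) prefix_weight c.

Lemma prefix_weight_rcons n (c : n.-tuple T) x :
  prefix_weight [tuple of rcons c x] =
  prefix_weight c * (w x / f (x |: [set y in tval c])).
Proof.
rewrite /prefix_weight big_ord_recr /=; congr (_ * (w _ / f _)).
- apply: eq_bigr => p _; congr (w _ / f _).
    by rewrite !(tnth_nth x) /= nth_rcons size_tuple ltn_ord.
  by rewrite !prefI_take /= -cats1 takel_cat // size_tuple.
- by rewrite (tnth_nth x) /= nth_rcons size_tuple ltnn eqxx.
- by rewrite prefI_take take_oversize ?set_rcons // size_rcons size_tuple.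
Qed.

Lemma support_massS (A : {set T}) n : f A != 0 ->
  f A * support_mass A n.+1 =
  (\sum_(i in A) w i) * support_mass A n + \sum_(i in A) w i * support_mass (A :\ i) n.
Proof.
move=> fA_neq0; rewrite mulr_suml -big_split /= /support_mass big_mkcond.
rewrite big_tuple_rcons big_distrr /=.
under eq_bigr do rewrite big_distrr /=.
rewrite exchange_big [RHS]big_mkcond /=; apply: eq_bigr => x _.
case: ifPn => xA; last first.
  by rewrite big1 // => c _; rewrite set_rcons setU1_eq (negbTE xA) mulr0.
rewrite !big_distrr /= !(big_mkcond (fun c : n.-tuple T => _ == _)) -big_split /=.
apply: eq_bigr => c _; rewrite set_rcons setU1_eq xA prefix_weight_rcons /=.
have A_neq_Ax : (A == A :\ x) = false.
  by apply/negbTE/eqP => /setP /(_ x); rewrite setD11 xA.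
have [-> | _] := eqVneq [set y in tval c] A.
  by rewrite A_neq_Ax (setUidPr _) ?sub1set //= addr0; field.
have [-> | _] /= := eqVneq [set y in tval c] (A :\ x).
  by rewrite setD1K // add0r; field.
by rewrite mulr0 addr0.
Qed.

Lemma support_mass0 (A : {set T}) : A != set0 -> support_mass A 0 = 0.
Proof.
move=> /set0Pn[y yA]; rewrite /support_mass big1 // => c /eqP cA.
by move: yA; rewrite -cA inE tuple0.
Qed.

Lemma support_mass_set0S n : support_mass set0 n.+1 = 0.
Proof.
rewrite /support_mass big1 // => c /eqP/setP/(_ (tnth c ord0)).
by rewrite !inE mem_tnth.
Qed.

Lemma support_mass_ge0 (A : {set T}) n :
  (forall x, 0 <= w x) -> (forall B, 0 <= f B) -> 0 <= support_mass A n.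
Proof.
move=> w_ge0 f_ge0; apply: sumr_ge0 => c _.
by apply: prodr_ge0 => p _; exact: divr_ge0.
Qed.

End PrefixWeight.

Section NonnegSums.
Variables (R : numDomainType) (T : finType) (F : T -> R).

Lemma sum_setC (A : {set T}) :
  \sum_(x in ~: A) F x = \sum_x F x - \sum_(x in A) F x.
Proof.
rewrite [X in _ = X - _](bigID [in A]) /= addrC addrK.
by apply: eq_bigl => x; rewrite inE.
Qed.

Lemma ler_sum_subset (A B : {set T}) : (forall x, 0 <= F x) -> A \subset B ->
  \sum_(x in A) F x <= \sum_(x in B) F x.
Proof.
move=> F_ge0 AB; rewrite [leRHS](big_setID A) /= (setIidPr AB) lerDl.
by apply: sumr_ge0 => x _.
Qed.

Lemma sumr_set_gt0 (A : {set T}) : (forall x, 0 < F x) -> A != set0 ->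
  0 < \sum_(x in A) F x.
Proof.
move=> F_gt0 /set0Pn[a aA]; rewrite (big_setD1 a aA) /= ltr_pwDl //.
by apply: sumr_ge0 => x _; exact: ltW.
Qed.

End NonnegSums.

Section SeriesRecurrence.
Variable R : realType.
Local Open Scope classical_set_scope.

Lemma is_cvg_series_tail0 (u : R ^nat) : (forall n, u n.+1 = 0) -> cvgn (series u).
Proof.
move=> u_tail0; apply/cvg_ex; exists (u 0%N); rewrite -cvg_shiftS.
suff -> : [sequence series u n.+1]_n = cst (u 0%N) by exact: cvg_cst.
apply/funext => N; rewrite /series /= big_nat_recl // big1 ?addr0 // => n _.
Qed.

Lemma cvg_series_linear_rec (u v : R ^nat) (b c : R) :
  (forall n, 0 <= u n) -> u 0%N = 0 -> 0 <= c -> b < c ->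
  (forall n, c * u n.+1 = b * u n + v n) -> cvgn (series v) ->
  cvgn (series u) /\ (c - b) * limn (series u) = limn (series v).
Proof.
move=> u_ge0 u0 c_ge0 bc u_rec cvg_v.
have series_rec N : c * series u N.+1 = b * series u N + series v N.
  rewrite /series /= big_nat_recl // u0 add0r !mulr_sumr -big_split /=.
  by apply: eq_bigr => n _; rewrite u_rec.
have u_nd : nondecreasing_seq (series u) by apply: nondecreasing_series => n _ _.
have [M v_le] := bounded_fun_has_ubound (cvg_seq_bounded cvg_v).
have cvg_u : cvgn (series u).
  apply: nondecreasing_is_cvgn => //; exists (M / (c - b)) => _ [N _ <-].
  rewrite ler_pdivlMr ?subr_gt0 // mulrBr.
  have vN : series v N <= M by apply: v_le; exists N.
  have := u_nd _ _ (leqnSn N); have := series_rec N; nra.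
split=> //.
have lim_v : series v @ \oo --> (c - b) * limn (series u).
  have -> : series v = (fun N => c * series u N.+1 - b * series u N).
    by apply/funext => N; rewrite series_rec addrAC subrr add0r.
  by rewrite mulrBl; apply: cvgB; apply: cvgMl_tmp; rewrite ?cvg_shiftS.
by rewrite (cvg_lim _ lim_v).
Qed.

Lemma cvgn_sum (J : Type) (r : seq J) (P : pred J) (u : J -> R ^nat) (l : J -> R) :
  (forall j, P j -> u j @ \oo --> l j) ->
  (fun n => \sum_(j <- r | P j) u j n) @ \oo --> \sum_(j <- r | P j) l j.
Proof. by move=> u_cvg; apply: cvg_big => //; exact: add_continuous. Qed.

End SeriesRecurrence.

Section BalanceEquation.
Variables (R : realType) (I K : finType) (lam : I -> R) (mu : K -> R).
Implicit Types (AI A : {set I}) (AK B : {set K}).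

Definition balance_rhs (F : {set I} -> {set K} -> R) AI AK : R :=
  muS mu AK * (\sum_(i in AI) lam i * F (AI :\ i) AK)
  + lamS lam AI * (\sum_(k in AK) mu k * F AI (AK :\ k))
  + \sum_(i in AI) \sum_(k in AK) lam i * mu k * F (AI :\ i) (AK :\ k).

Lemma eq_balance_rhs (F G : {set I} -> {set K} -> R) AI AK :
  (forall A B, A \subset AI -> B \subset AK -> F A B = G A B) ->
  balance_rhs F AI AK = balance_rhs G AI AK.
Proof.
move=> FG; rewrite /balance_rhs; congr (_ * _ + _ * _ + _).
- by apply: eq_bigr => i _; rewrite FG ?subD1set.
- by apply: eq_bigr => k _; rewrite FG ?subD1set.
- by apply: eq_bigr => i _; apply: eq_bigr => k _; rewrite FG ?subD1set.
Qed.

Lemma balance_rhs_mul (F : {set I} -> R) (G : {set K} -> R) AI AK :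
  balance_rhs (fun A B => F A * G B) AI AK =
  muS mu AK * G AK * (\sum_(i in AI) lam i * F (AI :\ i))
  + lamS lam AI * F AI * (\sum_(k in AK) mu k * G (AK :\ k))
  + (\sum_(i in AI) lam i * F (AI :\ i)) * (\sum_(k in AK) mu k * G (AK :\ k)).
Proof.
rewrite /balance_rhs; congr (_ + _ + _).
- rewrite -mulrA; congr (_ * _); rewrite mulr_sumr.
  by apply: eq_bigr => i _; rewrite mulrA mulrC.
- rewrite -mulrA; congr (_ * _); rewrite mulr_sumr.
  by apply: eq_bigr => k _; rewrite mulrCA.
- rewrite big_distrl; apply: eq_bigr => i _; rewrite big_distrr.
  by apply: eq_bigr => k _; rewrite mulrACA.
Qed.

Lemma mulr_balance_rhs a (F : {set I} -> {set K} -> R) AI AK :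
  a * balance_rhs F AI AK = balance_rhs (fun A B => a * F A B) AI AK.
Proof.
rewrite /balance_rhs !mulrDr; congr (_ + _ + _).
- rewrite mulrCA; congr (_ * _); rewrite mulr_sumr.
  by apply: eq_bigr => i _; rewrite mulrCA.
- rewrite mulrCA; congr (_ * _); rewrite mulr_sumr.
  by apply: eq_bigr => k _; rewrite mulrCA.
- rewrite mulr_sumr; apply: eq_bigr => i _; rewrite mulr_sumr.
  by apply: eq_bigr => k _; rewrite mulrCA.
Qed.

Lemma series_balance_rhs (F : nat -> {set I} -> {set K} -> R) AI AK N :
  series (fun n => balance_rhs (F n) AI AK) N =
  balance_rhs (fun A B => series (fun n => F n A B) N) AI AK.
Proof.
rewrite /series /balance_rhs /= !big_split /= -!mulr_sumr.
congr (_ * _ + _ * _ + _).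
- by rewrite exchange_big; apply: eq_bigr => i _; rewrite mulr_sumr.
- by rewrite exchange_big; apply: eq_bigr => k _; rewrite mulr_sumr.
- rewrite exchange_big; apply: eq_bigr => i _; rewrite exchange_big.
  by apply: eq_bigr => k _; rewrite mulr_sumr.
Qed.

Local Open Scope classical_set_scope.

Lemma cvg_balance_rhs (F : nat -> {set I} -> {set K} -> R)
    (L : {set I} -> {set K} -> R) AI AK :
  (forall A B, A \subset AI -> B \subset AK -> (A != AI) || (B != AK) ->
     (fun n => F n A B) @ \oo --> L A B) ->
  (fun n => balance_rhs (F n) AI AK) @ \oo --> balance_rhs L AI AK.
Proof.
move=> F_cvg; have neqD1 (T : finType) (A : {set T}) x : x \in A -> A :\ x != A.
  by move=> xA; apply: proper_neq; exact: properD1.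
rewrite /balance_rhs; apply: cvgD; first apply: cvgD.
- apply: (cvgMl_tmp (cvgn_sum _)) => i iA; apply: cvgMl_tmp.
  by apply: F_cvg; rewrite ?subD1set ?neqD1.
- apply: (cvgMl_tmp (cvgn_sum _)) => k kA; apply: cvgMl_tmp.
  by apply: F_cvg; rewrite ?subD1set ?neqD1 ?orbT.
- apply: cvgn_sum => i iA; apply: cvgn_sum => k kA; apply: cvgMl_tmp.
  by apply: F_cvg; rewrite ?subD1set ?neqD1.
Qed.

End BalanceEquation.

Section Matching.
Variables (R : realType) (I K : finType) (adj : I -> K -> bool)
          (lam : I -> R) (mu : K -> R).
Implicit Types (AI A : {set I}) (AK B : {set K}).

Definition independent AI AK :=
  forall i k, i \in AI -> k \in AK -> ~~ adj i k.

Local Notation muK := (fun A => muS mu (KofI adj A)).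
Local Notation lamI := (fun B => lamS lam (IofK adj B)).

Lemma independent_subset (AI AI' : {set I}) (AK AK' : {set K}) :
  AI' \subset AI -> AK' \subset AK -> independent AI AK -> independent AI' AK'.
Proof.
by move=> /subsetP sI /subsetP sK indep i k /sI iA /sK kA; exact: indep.
Qed.

Lemma massA_n_support_mass AI AK n : independent AI AK ->
  massA_n adj lam mu AI AK n = support_mass lam muK AI n * support_mass mu lamI AK n.
Proof.
move=> indep; rewrite /massA_n /support_mass big_distrl /= [RHS]big_mkcond.
apply: eq_bigr => c _; case: eqP => [cA | _]; last by rewrite big1 // => d; rewrite andbF.
rewrite big_distrr /= big_mkcond [RHS]big_mkcond /=; apply: eq_bigr => d _.
case: eqP => [dA | _]; last by rewrite !andbF.
have -> : valid_state adj c d.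
  apply/forallP => p; apply/forallP => q.
  by apply: indep; [rewrite -cA inE mem_tnth | rewrite -dA inE mem_tnth].
by rewrite /weight big_split.
Qed.

Hypothesis connected : connected_graph adj.

Lemma connected_adjI (i : I) (y : I + K) : y != inl i -> exists k, adj i k.
Proof.
move=> y_neq; have /connectP[[|[//|k] p] /=] := connected (inl i) y.
  by move=> _ y_eq; rewrite y_eq eqxx in y_neq.
by case/andP => ik _ _; exists k.
Qed.

Lemma connected_adjK (k : K) (y : I + K) : y != inr k -> exists i, adj i k.
Proof.
move=> y_neq; have /connectP[[|[i|//] p] /=] := connected (inr k) y.
  by move=> _ y_eq; rewrite y_eq eqxx in y_neq.
by case/andP => ik _ _; exists i.
Qed.

Hypotheses (lam_gt0 : forall i, 0 < lam i) (mu_gt0 : forall k, 0 < mu k)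
    (lam_sum1 : \sum_(i : I) lam i = 1) (mu_sum1 : \sum_(k : K) mu k = 1)
    (stability : forall A : {set I}, A != set0 -> A != [set: I] ->
       lamS lam A < muS mu (KofI adj A)).

(* Apply the stability condition to the customer classes that are
   incompatible with every server class of [AK]. *)
Lemma dual_stability (AK : {set K}) : AK != set0 -> AK != [set: K] ->
  muS mu AK < lamS lam (IofK adj AK).
Proof.
move=> /set0Pn[k0 k0A]; rewrite -properT => /properP[_ [k1 _ k1A]].
have [i ik0] : exists i, adj i k0.
  by apply: (@connected_adjK _ (inr k1)); apply: contraNneq k1A => -[->].
have iIAK : i \in IofK adj AK by rewrite inE; apply/existsP; exists k0; rewrite k0A.
have muS_setC : muS mu (~: AK) = 1 - muS mu AK by rewrite /muS sum_setC mu_sum1.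
have muS_setC_gt0 : 0 < muS mu (~: AK).
  by apply: sumr_set_gt0 => //; apply/set0Pn; exists k1; rewrite inE.
set B := ~: IofK adj AK.
have lamS_B : lamS lam B = 1 - lamS lam (IofK adj AK) by rewrite /lamS sum_setC lam_sum1.
have [B0 | B_neq0] := eqVneq B set0.
  by move: lamS_B; rewrite B0 /lamS big_set0; lra.
have B_neqT : B != [set: I] by apply/negP => /eqP/setP/(_ i); rewrite in_setC iIAK in_setT.
have KofI_B : KofI adj B \subset ~: AK.
  apply/subsetP => k; rewrite !inE => /existsP[i' /andP[i'B i'k]].
  apply: contraTN i'B => kA; rewrite in_setC negbK inE.
  by apply/existsP; exists k; rewrite kA.
have := ler_sum_subset (fun k => ltW (mu_gt0 k)) KofI_B.
have := stability B_neq0 B_neqT.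
rewrite -/(muS mu _) -/(muS mu _); lra.
Qed.

Lemma independent_stability AI AK : independent AI AK -> AI != set0 -> AK != set0 ->
  lamS lam AI < muS mu (KofI adj AI) /\ muS mu AK < lamS lam (IofK adj AK).
Proof.
move=> indep /set0Pn[i0 i0A] /set0Pn[k0 k0A].
have [i ik0] := @connected_adjK k0 (inl i0) isT.
have [k i0k] := @connected_adjI i0 (inr k0) isT.
split.
  apply: stability; first by apply/set0Pn; exists i0.
  by apply/negP => /eqP AIT; move: (indep i k0); rewrite AIT inE ik0 => /(_ isT k0A).
apply: dual_stability; first by apply/set0Pn; exists k0.
by apply/negP => /eqP AKT; move: (indep i0 k); rewrite AKT inE i0k => /(_ i0A isT).
Qed.

Lemma lamS_ge0 (A : {set I}) : 0 <= lamS lam A.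
Proof. by apply: sumr_ge0 => i _; exact: ltW. Qed.

Lemma muS_ge0 (B : {set K}) : 0 <= muS mu B.
Proof. by apply: sumr_ge0 => k _; exact: ltW. Qed.

Local Notation m := (massA_n adj lam mu).

Lemma massA_n_ge0 AI AK n : independent AI AK -> 0 <= m AI AK n.
Proof.
move=> indep; rewrite massA_n_support_mass //.
by apply: mulr_ge0; apply: support_mass_ge0 => *; rewrite ?lamS_ge0 ?muS_ge0 ?ltW.
Qed.

Lemma massA_n0 AI AK : independent AI AK -> AI != set0 -> m AI AK 0 = 0.
Proof. by move=> indep AI0; rewrite massA_n_support_mass // support_mass0 // mul0r. Qed.

Lemma massA_n_tail0 AI AK n : independent AI AK ->
  (AI == set0) || (AK == set0) -> m AI AK n.+1 = 0.
Proof.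
move=> indep /orP[] /eqP A0; rewrite massA_n_support_mass // A0 support_mass_set0S.
  by rewrite mul0r.
by rewrite mulr0.
Qed.

Lemma massA_n_rec AI AK n : independent AI AK -> AI != set0 -> AK != set0 ->
  muS mu (KofI adj AI) * lamS lam (IofK adj AK) * m AI AK n.+1 =
  lamS lam AI * muS mu AK * m AI AK n + balance_rhs lam mu (fun A B => m A B n) AI AK.
Proof.
move=> indep AI0 AK0; have [lt_I lt_K] := independent_stability indep AI0 AK0.
have lamS_gt0 : 0 < lamS lam AI by exact: sumr_set_gt0.
have muS_gt0 : 0 < muS mu AK by exact: sumr_set_gt0.
have -> : balance_rhs lam mu (fun A B => m A B n) AI AK =
    balance_rhs lam mu (fun A B => support_mass lam muK A n * support_mass mu lamI B n) AI AK.
  apply: eq_balance_rhs => A B sA sB.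
  by rewrite massA_n_support_mass //; exact: independent_subset indep.
rewrite !massA_n_support_mass // mulrACA (@support_massS _ _ _ muK)
  ?(@support_massS _ _ _ lamI) ?gt_eqF ?(lt_trans _ lt_I) ?(lt_trans _ lt_K) //.
by rewrite balance_rhs_mul /lamS /muS; ring.
Qed.

Lemma massA_series_rec AI AK : independent AI AK -> AI != set0 -> AK != set0 ->
  (forall A B, A \subset AI -> B \subset AK -> (A != AI) || (B != AK) ->
     cvgn (series (m A B))) ->
  cvgn (series (m AI AK)) /\
  Delta adj lam mu AI AK * limn (series (m AI AK)) =
  balance_rhs lam mu (fun A B => limn (series (m A B))) AI AK.
Proof.
move=> indep AI0 AK0 cvg_sub.
have [lt_I lt_K] := independent_stability indep AI0 AK0.
have series_rhs : series (fun n => balance_rhs lam mu (fun A B => m A B n) AI AK) =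
    fun N => balance_rhs lam mu (fun A B => series (m A B) N) AI AK.
  by apply/funext => N; exact: series_balance_rhs.
have lim_rhs := @cvg_balance_rhs _ _ _ lam mu _ _ _ _ cvg_sub.
have [|cvg_m ->] := cvg_series_linear_rec (fun n => massA_n_ge0 n indep) (massA_n0 indep AI0)
  (mulr_ge0 (muS_ge0 _) (lamS_ge0 _)) (ltr_pM (lamS_ge0 _) (muS_ge0 _) lt_I lt_K)
  (fun n => massA_n_rec n indep AI0 AK0).
  by rewrite series_rhs; apply/cvg_ex; eexists; exact: lim_rhs.
by split=> //; apply: cvg_lim => //; rewrite series_rhs.
Qed.

Lemma massA_series_cvg AI AK : independent AI AK -> cvgn (series (m AI AK)).
Proof.
have [N] := ubnP (#|AI| + #|AK|); elim: N AI AK => // N IH AI AK card_lt indep.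
have [AI0 | AI0] := eqVneq AI set0.
  by apply: is_cvg_series_tail0 => n; apply: massA_n_tail0 indep _; rewrite AI0 eqxx.
have [AK0 | AK0] := eqVneq AK set0.
  by apply: is_cvg_series_tail0 => n; apply: massA_n_tail0 indep _; rewrite AK0 eqxx orbT.
apply: (massA_series_rec indep AI0 AK0 _).1 => A B sA sB neq.
apply: IH (independent_subset sA sB indep).
have leA := subset_leq_card sA; have leB := subset_leq_card sB.
have [ltA | ltB] : (#|A| < #|AI|)%N \/ (#|B| < #|AK|)%N.
  by case/orP: neq => neq; [left | right]; apply: proper_card; rewrite properEneq neq.
all: lia.
Qed.

End Matching.

Theorem proposition1 (R : realType) (I K : finType) (adj : I -> K -> bool)
    (lam : I -> R) (mu : K -> R)
    (Hconn : connected_graph adj)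
    (Hlam : forall i, 0 < lam i) (Hmu : forall k, 0 < mu k)
    (Hlam1 : \sum_(i : I) lam i = 1) (Hmu1 : \sum_(k : K) mu k = 1)
    (Hstab : forall A : {set I}, A != finset.set0 -> A != [set: I] ->
       lamS lam A < muS mu (KofI adj A))
    (AI : {set I}) (AK : {set K})
    (Hind : forall i k, i \in AI -> k \in AK -> ~~ adj i k)
    (HAI : AI != finset.set0) (HAK : AK != finset.set0) :
  Delta adj lam mu AI AK * piA adj lam mu AI AK =
    muS mu AK * (\sum_(i in AI) lam i * piA adj lam mu (AI :\ i) AK)
  + lamS lam AI * (\sum_(k in AK) mu k * piA adj lam mu AI (AK :\ k))
  + \sum_(i in AI) \sum_(k in AK)
        lam i * mu k * piA adj lam mu (AI :\ i) (AK :\ k).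
Proof.
have cvg_sub (A : {set I}) (B : {set K}) : A \subset AI -> B \subset AK ->
    cvgn (series (massA_n adj lam mu A B)).
  move=> sA sB; apply: (massA_series_cvg Hconn Hlam Hmu Hlam1 Hmu1 Hstab).
  exact: independent_subset Hind.
have [_ Delta_lim] := massA_series_rec Hconn Hlam Hmu Hlam1 Hmu1 Hstab Hind HAI HAK
  (fun A B sA sB _ => cvg_sub A B sA sB).
by rewrite /piA mulrCA Delta_lim mulr_balance_rhs.
Qed.
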